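(* Let $c,d>0$ and let $\mathcal R(c,d)=(0,c)\times(0,d)\subset\mathbb R^2$. Let $u$ be a real-valued Neumann eigenfunction of the Laplacian on $\mathcal R(c,d)$, i.e. $-\Delta u=\lambda u$ in $\mathcal R(c,d)$ for some $\lambda$, with $\frac{\partial u}{\partial \nu}=0$ on $\partial\mathcal R(c,d)$, where $\nu$ is the outward normal. If $u>0$ on $\partial\mathcal R(c,d)$, then $u$ is constant (necessarily a positive constant).
   Context: The Neumann eigenvalues of $\mathcal R(c,d)$ are $\lambda_{m,n}=\pi^2(m^2/c^2+n^2/d^2)$, $(m,n)\in\mathbb N_0^2$, with eigenfunctions $\cos(m\pi x/c)\cos(n\pi y/d)$; an eigenfunction for a (possibly degenerate) eigenvalue $\lambda$ is any nonzero real linear combination of those $\cos(m\pi x/c)\cos(n\pi y/d)$ with $\lambda_{m,n}=\lambda$. The eigenfunction is smooth up to the boundary, so its boundary values make sense. *)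

From Stdlib Require Import Reals Lra.
Open Scope R_scope.

Definition in_closed_rect (c d x y : R) : Prop :=
  0 <= x <= c /\ 0 <= y <= d.

Definition on_boundary (c d x y : R) : Prop :=
  in_closed_rect c d x y /\ (x = 0 \/ x = c \/ y = 0 \/ y = d).

Definition neumann_ev (c d : R) (m n : nat) : R :=
  PI ^ 2 * (INR m ^ 2 / c ^ 2 + INR n ^ 2 / d ^ 2).

Definition neumann_mode (c d : R) (m n : nat) (x y : R) : R :=
  cos (INR m * PI * x / c) * cos (INR n * PI * y / d).

Definition mode_comb (c d : R) (N : nat) (a : nat -> nat -> R) (x y : R) : R :=
  sum_f_R0 (fun m => sum_f_R0 (fun n => a m n * neumann_mode c d m n x y) N) N.

(* u is a Neumann eigenfunction of the Laplacian on R(c,d) with eigenvalue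
   lam: on the closed rectangle u equals a nonzero real linear combination of
   the modes whose eigenvalue is lam (the description given in the context). *)
Definition neumann_eigenfunction (c d lam : R) (u : R -> R -> R) : Prop :=
  exists (N : nat) (a : nat -> nat -> R),
    (forall m n, (m <= N)%nat -> (n <= N)%nat -> a m n <> 0 ->
        neumann_ev c d m n = lam) /\
    (exists m n, (m <= N)%nat /\ (n <= N)%nat /\ a m n <> 0) /\
    (forall x y, in_closed_rect c d x y -> u x y = mode_comb c d N a x y).

(* Sample the boundary at the midpoints of A equal subintervals of the
   horizontal edges and of B equal subintervals of the vertical edges.  With A
   nodes the midpoint sum of cos (m pi x / c) vanishes for 0 < m < 2A, while for
   m = 2A the cosine aliases to -1 at every node.  On the two horizontal edges
   a mode (m, n) contributes (1 + (-1)^n) times that sum.  Hence, for an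
   eigenvalue lam <> 0, nonnegative edge weights exist whose quadrature
   annihilates every mode of eigenvalue lam: if there is no mode (0, n) with n
   even, the horizontal edges with A > N suffice (symmetrically for the
   vertical ones); otherwise lam = pi^2 (2B/d)^2 = pi^2 (2A/c)^2, every other
   mode has m < 2A and n < 2B, and weighting the horizontal edges by B and the
   vertical ones by A makes the aliased contributions of (0, 2B) and (2A, 0)
   cancel.  Since the quadrature of a function positive on the boundary is
   positive, lam = 0, and the eigenfunction is the constant mode. *)
From Stdlib Require Import Reals Lra Lia Psatz Classical.
Open Scope R_scope.

Fixpoint sum_lt (A : nat) (f : nat -> R) : R :=
  match A with O => 0 | S A' => sum_lt A' f + f A' end.

Lemma sum_lt_ext A f g :
  (forall k, (k < A)%nat -> f k = g k) -> sum_lt A f = sum_lt A g.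
Proof.
  induction A as [|A IH]; intros H; simpl; [reflexivity|].
  rewrite IH, H; [reflexivity | lia | intros; apply H; lia].
Qed.

Lemma sum_lt_plus A f g : sum_lt A (fun k => f k + g k) = sum_lt A f + sum_lt A g.
Proof. induction A as [|A IH]; simpl; [ring | rewrite IH; ring]. Qed.

Lemma sum_lt_scal A a f : sum_lt A (fun k => a * f k) = a * sum_lt A f.
Proof. induction A as [|A IH]; simpl; [ring | rewrite IH; ring]. Qed.

Lemma sum_lt_const A r : sum_lt A (fun _ => r) = INR A * r.
Proof. induction A as [|A IH]; simpl sum_lt; [simpl; ring | rewrite IH, S_INR; ring]. Qed.

Lemma sum_lt_pos A f :
  (1 <= A)%nat -> (forall k, (k < A)%nat -> 0 < f k) -> 0 < sum_lt A f.
Proof.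
  induction A as [|A IH]; intros HA Hf; [lia|]; simpl.
  assert (0 < f A) by (apply Hf; lia).
  destruct A as [|A]; [simpl; lra|].
  assert (0 < sum_lt (S A) f) by (apply IH; [lia | intros; apply Hf; lia]).
  lra.
Qed.

Lemma INR_double n : INR (2 * n) = 2 * INR n.
Proof. rewrite mult_INR. simpl. ring. Qed.

Lemma sin_INR_mult_PI n : sin (INR n * PI) = 0.
Proof.
  induction n as [|n IH]; [simpl; rewrite Rmult_0_l; apply sin_0|].
  rewrite S_INR, Rmult_plus_distr_r, Rmult_1_l, neg_sin, IH; ring.
Qed.

Lemma cos_INR_mult_PI n : cos (INR n * PI) = (-1) ^ n.
Proof.
  induction n as [|n IH]; [simpl; rewrite Rmult_0_l; apply cos_0|].
  rewrite S_INR, Rmult_plus_distr_r, Rmult_1_l, neg_cos, IH; simpl; ring.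
Qed.

Lemma sum_lt_cos_odd_mul A h :
  sum_lt A (fun k => cos (INR (2 * k + 1) * h)) * (2 * sin h) = sin (2 * INR A * h).
Proof.
  induction A as [|A IH]; [simpl; replace (2 * 0 * h) with 0 by ring; rewrite sin_0; ring|].
  cbn [sum_lt]. rewrite Rmult_plus_distr_r, IH.
  replace (2 * INR (S A) * h) with (INR (2 * A + 1) * h + h)
    by (rewrite S_INR, plus_INR, mult_INR; simpl; ring).
  replace (2 * INR A * h) with (INR (2 * A + 1) * h - h)
    by (rewrite plus_INR, mult_INR; simpl; ring).
  rewrite sin_plus, sin_minus; ring.
Qed.

Definition midpoint_cos_sum (A m : nat) : R :=
  sum_lt A (fun k => cos (INR (2 * k + 1) * (INR m * PI / (2 * INR A)))).

Lemma midpoint_cos_sum_0 A : midpoint_cos_sum A 0 = INR A.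
Proof.
  unfold midpoint_cos_sum. rewrite (sum_lt_ext _ _ (fun _ => 1)).
  - rewrite sum_lt_const; ring.
  - intros k _. simpl INR. unfold Rdiv. rewrite !Rmult_0_l, Rmult_0_r. apply cos_0.
Qed.

Lemma midpoint_cos_sum_exact A m : (0 < m < 2 * A)%nat -> midpoint_cos_sum A m = 0.
Proof.
  intros Hm. unfold midpoint_cos_sum.
  set (h := INR m * PI / (2 * INR A)).
  assert (HA : 0 < INR A) by (apply lt_0_INR; lia).
  assert (Hm0 : 0 < INR m) by (apply lt_0_INR; lia).
  assert (Hm2 : INR m < 2 * INR A)
    by (rewrite <- INR_double; apply lt_INR; lia).
  pose proof PI_RGT_0.
  assert (Hsin : 0 < sin h).
  { apply sin_gt_0; unfold h.
    - apply Rdiv_lt_0_compat; nra.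
    - apply Rmult_lt_reg_r with (2 * INR A); [lra|].
      unfold Rdiv. rewrite Rmult_assoc, Rinv_l by lra. nra. }
  pose proof (sum_lt_cos_odd_mul A h) as T.
  replace (2 * INR A * h) with (INR m * PI) in T by (unfold h; field; lra).
  rewrite sin_INR_mult_PI in T. nra.
Qed.

Lemma midpoint_cos_sum_alias A : (1 <= A)%nat -> midpoint_cos_sum A (2 * A) = - INR A.
Proof.
  intros HA. unfold midpoint_cos_sum.
  assert (0 < INR A) by (apply lt_0_INR; lia).
  rewrite (sum_lt_ext _ _ (fun _ => -1)); [rewrite sum_lt_const; ring|].
  intros k _.
  replace (INR (2 * k + 1) * (INR (2 * A) * PI / (2 * INR A))) with (INR (2 * k + 1) * PI)
    by (rewrite INR_double; field; lra).
  rewrite cos_INR_mult_PI, Nat.add_1_r, pow_1_odd. reflexivity.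
Qed.

Definition midpoint_node (A : nat) (c : R) (k : nat) : R := INR (2 * k + 1) * c / (2 * INR A).

Lemma midpoint_node_bounds A c k : 0 < c -> (k < A)%nat -> 0 <= midpoint_node A c k <= c.
Proof.
  intros Hc Hk. unfold midpoint_node.
  assert (HA : 0 < INR A) by (apply lt_0_INR; lia).
  assert (H1 : INR (2 * k + 1) <= 2 * INR A)
    by (rewrite <- INR_double; apply le_INR; lia).
  pose proof (pos_INR (2 * k + 1)).
  split.
  - apply Rle_mult_inv_pos; nra.
  - apply Rmult_le_reg_r with (2 * INR A); [lra|].
    unfold Rdiv. rewrite Rmult_assoc, Rinv_l by lra. nra.
Qed.

Lemma neumann_mode_swap c d m n x y : neumann_mode c d m n x y = neumann_mode d c n m y x.
Proof. unfold neumann_mode. ring. Qed.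

Lemma neumann_mode_horizontal_edges c d A m n k : 0 < c -> 0 < d -> (k < A)%nat ->
  neumann_mode c d m n (midpoint_node A c k) 0 + neumann_mode c d m n (midpoint_node A c k) d
  = (1 + (-1) ^ n) * cos (INR (2 * k + 1) * (INR m * PI / (2 * INR A))).
Proof.
  intros Hc Hd Hk. unfold neumann_mode, midpoint_node.
  assert (0 < INR A) by (apply lt_0_INR; lia).
  replace (INR n * PI * 0 / d) with 0 by (field; lra).
  replace (INR n * PI * d / d) with (INR n * PI) by (field; lra).
  replace (INR m * PI * (INR (2 * k + 1) * c / (2 * INR A)) / c)
    with (INR (2 * k + 1) * (INR m * PI / (2 * INR A))) by (field; lra).
  rewrite cos_0, cos_INR_mult_PI. ring.
Qed.

Definition boundary_quadrature (c d al be : R) (A B : nat) (g : R -> R -> R) : R :=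
  al * sum_lt A (fun k => g (midpoint_node A c k) 0 + g (midpoint_node A c k) d)
  + be * sum_lt B (fun l => g 0 (midpoint_node B d l) + g c (midpoint_node B d l)).

Section BoundaryQuadrature.

Variables (c d al be : R) (A B : nat).
Hypotheses (Hc : 0 < c) (Hd : 0 < d).

Local Notation Q := (boundary_quadrature c d al be A B).

Lemma boundary_quadrature_add f g : Q (fun x y => f x y + g x y) = Q f + Q g.
Proof.
  unfold boundary_quadrature.
  rewrite (sum_lt_ext A _ (fun k => (f (midpoint_node A c k) 0 + f (midpoint_node A c k) d)
                                   + (g (midpoint_node A c k) 0 + g (midpoint_node A c k) d)))
    by (intros; ring).
  rewrite (sum_lt_ext B _ (fun l => (f 0 (midpoint_node B d l) + f c (midpoint_node B d l))
                                   + (g 0 (midpoint_node B d l) + g c (midpoint_node B d l))))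
    by (intros; ring).
  rewrite !sum_lt_plus. ring.
Qed.

Lemma boundary_quadrature_scal a f : Q (fun x y => a * f x y) = a * Q f.
Proof.
  unfold boundary_quadrature.
  rewrite (sum_lt_ext A _ (fun k => a * (f (midpoint_node A c k) 0 + f (midpoint_node A c k) d)))
    by (intros; ring).
  rewrite (sum_lt_ext B _ (fun l => a * (f 0 (midpoint_node B d l) + f c (midpoint_node B d l))))
    by (intros; ring).
  rewrite !sum_lt_scal. ring.
Qed.

Lemma boundary_quadrature_sum (F : nat -> R -> R -> R) N :
  Q (fun x y => sum_f_R0 (fun i => F i x y) N) = sum_f_R0 (fun i => Q (F i)) N.
Proof.
  induction N as [|N IH]; [reflexivity|].
  simpl. rewrite (boundary_quadrature_add (fun x y => sum_f_R0 (fun i => F i x y) N)), IH.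
  reflexivity.
Qed.

Lemma boundary_quadrature_mode_comb_eq0 N a :
  (forall m n, (m <= N)%nat -> (n <= N)%nat -> a m n <> 0 -> Q (neumann_mode c d m n) = 0) ->
  Q (mode_comb c d N a) = 0.
Proof.
  intros Hann. unfold mode_comb.
  rewrite (boundary_quadrature_sum
             (fun m x y => sum_f_R0 (fun n => a m n * neumann_mode c d m n x y) N)).
  rewrite (sum_eq _ (fun _ => 0)); [rewrite sum_cte; ring|]. intros m Hm.
  rewrite (boundary_quadrature_sum (fun n x y => a m n * neumann_mode c d m n x y)).
  rewrite (sum_eq _ (fun _ => 0)); [rewrite sum_cte; ring|]. intros n Hn.
  rewrite boundary_quadrature_scal.
  destruct (Req_dec (a m n) 0) as [Ha | Ha]; [rewrite Ha; ring|].
  rewrite Hann by assumption. ring.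
Qed.

Lemma boundary_quadrature_ext f g :
  (forall x y, in_closed_rect c d x y -> f x y = g x y) -> Q f = Q g.
Proof.
  intros Hfg. unfold boundary_quadrature, in_closed_rect in *.
  rewrite (sum_lt_ext A _ (fun k => g (midpoint_node A c k) 0 + g (midpoint_node A c k) d)).
  rewrite (sum_lt_ext B _ (fun l => g 0 (midpoint_node B d l) + g c (midpoint_node B d l))).
  - reflexivity.
  - intros l Hl. pose proof (midpoint_node_bounds B d l Hd Hl). rewrite !Hfg; auto; lra.
  - intros k Hk. pose proof (midpoint_node_bounds A c k Hc Hk). rewrite !Hfg; auto; lra.
Qed.

Lemma boundary_quadrature_pos u :
  0 <= al -> 0 <= be -> 0 < al + be -> (1 <= A)%nat -> (1 <= B)%nat ->
  (forall x y, on_boundary c d x y -> 0 < u x y) -> 0 < Q u.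
Proof.
  intros Hal Hbe Hsum HA HB Hu. unfold boundary_quadrature.
  assert (0 < sum_lt A (fun k => u (midpoint_node A c k) 0 + u (midpoint_node A c k) d)).
  { apply sum_lt_pos; [exact HA|]. intros k Hk.
    pose proof (midpoint_node_bounds A c k Hc Hk).
    assert (0 < u (midpoint_node A c k) 0) by (apply Hu; repeat split; auto; lra).
    assert (0 < u (midpoint_node A c k) d) by (apply Hu; repeat split; auto; lra).
    lra. }
  assert (0 < sum_lt B (fun l => u 0 (midpoint_node B d l) + u c (midpoint_node B d l))).
  { apply sum_lt_pos; [exact HB|]. intros l Hl.
    pose proof (midpoint_node_bounds B d l Hd Hl).
    assert (0 < u 0 (midpoint_node B d l)) by (apply Hu; repeat split; auto; lra).
    assert (0 < u c (midpoint_node B d l)) by (apply Hu; repeat split; auto; lra).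
    lra. }
  destruct (Rlt_or_le 0 al); nra.
Qed.

Lemma boundary_quadrature_mode m n :
  Q (neumann_mode c d m n)
  = al * (1 + (-1) ^ n) * midpoint_cos_sum A m + be * (1 + (-1) ^ m) * midpoint_cos_sum B n.
Proof.
  unfold boundary_quadrature, midpoint_cos_sum.
  rewrite (sum_lt_ext A _ (fun k => (1 + (-1) ^ n)
                                   * cos (INR (2 * k + 1) * (INR m * PI / (2 * INR A)))))
    by (intros; apply neumann_mode_horizontal_edges; assumption).
  rewrite (sum_lt_ext B _ (fun l => (1 + (-1) ^ m)
                                   * cos (INR (2 * l + 1) * (INR n * PI / (2 * INR B))))).
  - rewrite !sum_lt_scal. ring.
  - intros l Hl. rewrite !(neumann_mode_swap c d m n).
    apply neumann_mode_horizontal_edges; assumption.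
Qed.

End BoundaryQuadrature.

Lemma neumann_ev_swap c d m n : neumann_ev c d m n = neumann_ev d c n m.
Proof. unfold neumann_ev. ring. Qed.

Lemma neumann_ev_0_0 c d : neumann_ev c d 0 0 = 0.
Proof. unfold neumann_ev. simpl INR. unfold Rdiv. ring. Qed.

Lemma neumann_ev_expand c d m n : 0 < c -> 0 < d ->
  neumann_ev c d m n = (PI / c) ^ 2 * INR m ^ 2 + (PI / d) ^ 2 * INR n ^ 2.
Proof. intros. unfold neumann_ev. field. lra. Qed.

Lemma INR_sq_lt m m' : INR m ^ 2 < INR m' ^ 2 -> (m < m')%nat.
Proof. intros H. pose proof (pos_INR m). pose proof (pos_INR m'). apply INR_lt. nra. Qed.

Lemma neumann_ev_lt_axis c d m n m' : 0 < c -> 0 < d -> (0 < n)%nat ->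
  neumann_ev c d m n = neumann_ev c d m' 0 -> (m < m')%nat.
Proof.
  intros Hc Hd Hn. rewrite !neumann_ev_expand by assumption. simpl (INR 0). intros Hev.
  assert (0 < (PI / c) ^ 2) by (apply pow_lt, Rdiv_lt_0_compat; [apply PI_RGT_0 | exact Hc]).
  assert (0 < (PI / d) ^ 2) by (apply pow_lt, Rdiv_lt_0_compat; [apply PI_RGT_0 | exact Hd]).
  assert (0 < INR n ^ 2) by (apply pow_lt, lt_0_INR; exact Hn).
  apply INR_sq_lt. nra.
Qed.

Lemma neumann_ev_axis_inj c d m m' : 0 < c -> 0 < d ->
  neumann_ev c d m 0 = neumann_ev c d m' 0 -> m = m'.
Proof.
  intros Hc Hd. rewrite !neumann_ev_expand by assumption. simpl (INR 0). intros Hev.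
  assert (0 < (PI / c) ^ 2) by (apply pow_lt, Rdiv_lt_0_compat; [apply PI_RGT_0 | exact Hc]).
  assert (Hsq : INR m ^ 2 = INR m' ^ 2) by (apply Rmult_eq_reg_l with ((PI / c) ^ 2); lra).
  pose proof (pos_INR m). pose proof (pos_INR m').
  apply INR_eq, Rle_antisym; nra.
Qed.

Lemma neumann_ev_eq0 c d m n : 0 < c -> 0 < d ->
  neumann_ev c d m n = 0 -> m = 0%nat /\ n = 0%nat.
Proof.
  intros Hc Hd Hev. rewrite <- (neumann_ev_0_0 c d) in Hev.
  destruct n as [|n].
  - split; [exact (neumann_ev_axis_inj c d m 0 Hc Hd Hev) | reflexivity].
  - pose proof (neumann_ev_lt_axis c d m (S n) 0 Hc Hd ltac:(lia) Hev). lia.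
Qed.

Lemma edge_term_vanishes A m n :
  (m = 0%nat -> Nat.Odd n) -> (m < 2 * A)%nat -> (1 + (-1) ^ n) * midpoint_cos_sum A m = 0.
Proof.
  intros Hodd Hm. destruct (Nat.eq_dec m 0) as [-> | Hm0].
  - destruct (Hodd eq_refl) as [k ->]. rewrite Nat.add_1_r, pow_1_odd. ring.
  - rewrite midpoint_cos_sum_exact by lia. ring.
Qed.

Lemma balanced_axis_quadrature c d A B m n : 0 < c -> 0 < d -> (1 <= A)%nat -> (1 <= B)%nat ->
  neumann_ev c d (2 * A) 0 = neumann_ev c d 0 (2 * B) ->
  neumann_ev c d m n = neumann_ev c d (2 * A) 0 ->
  boundary_quadrature c d (INR B) (INR A) A B (neumann_mode c d m n) = 0.
Proof.
  intros Hc Hd HA HB Haxes Hev.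
  assert (Hev' : neumann_ev d c n m = neumann_ev d c (2 * B) 0)
    by (rewrite !(neumann_ev_swap d c); congruence).
  rewrite boundary_quadrature_mode by assumption.
  destruct (Nat.eq_dec m 0) as [-> | Hm0].
  { assert (n = 2 * B)%nat as -> by (apply (neumann_ev_axis_inj d c); assumption).
    rewrite midpoint_cos_sum_0, midpoint_cos_sum_alias, pow_1_even by exact HB. simpl. ring. }
  destruct (Nat.eq_dec n 0) as [-> | Hn0].
  { assert (m = 2 * A)%nat as -> by (apply (neumann_ev_axis_inj c d); assumption).
    rewrite midpoint_cos_sum_0, midpoint_cos_sum_alias, pow_1_even by exact HA. simpl. ring. }
  assert (m < 2 * A)%nat by (apply (neumann_ev_lt_axis c d m n); auto; lia).
  assert (n < 2 * B)%nat by (apply (neumann_ev_lt_axis d c n m); auto; lia).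
  rewrite !midpoint_cos_sum_exact by lia. ring.
Qed.

Lemma annihilating_quadrature c d lam N (P : nat -> nat -> Prop) :
  0 < c -> 0 < d -> lam <> 0 ->
  (forall m n, P m n -> (m <= N)%nat /\ (n <= N)%nat /\ neumann_ev c d m n = lam) ->
  exists al be A B, 0 <= al /\ 0 <= be /\ 0 < al + be /\ (1 <= A)%nat /\ (1 <= B)%nat /\
    forall m n, P m n -> boundary_quadrature c d al be A B (neumann_mode c d m n) = 0.
Proof.
  intros Hc Hd Hlam HP.
  assert (Hodd_of : forall Q : nat -> Prop, ~ (exists k, Q k /\ Nat.Even k) ->
                      forall k, Q k -> Nat.Odd k).
  { intros Q HQ k Hk. destruct (Nat.Even_or_Odd k); [exfalso; eauto | assumption]. }
  destruct (classic (exists n0, P 0%nat n0 /\ Nat.Even n0)) as [[n0 [HPn0 [B ->]]] | Hno_n].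
  2: { exists 1, 0, (S N), 1%nat. repeat split; try lra; try lia.
       intros m n Hmn. destruct (HP m n Hmn) as [Hm _].
       rewrite boundary_quadrature_mode by assumption.
       rewrite Rmult_1_l, !Rmult_0_l, Rplus_0_r.
       apply edge_term_vanishes; [| lia].
       intros ->. exact (Hodd_of _ Hno_n n Hmn). }
  destruct (classic (exists m0, P m0 0%nat /\ Nat.Even m0)) as [[m0 [HPm0 [A ->]]] | Hno_m].
  2: { exists 0, 1, 1%nat, (S N). repeat split; try lra; try lia.
       intros m n Hmn. destruct (HP m n Hmn) as [_ [Hn _]].
       rewrite boundary_quadrature_mode by assumption.
       rewrite Rmult_1_l, !Rmult_0_l, Rplus_0_l.
       apply edge_term_vanishes; [| lia].
       intros ->. exact (Hodd_of (fun m => P m 0%nat) Hno_m m Hmn). }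
  destruct (HP _ _ HPn0) as [_ [_ HevB]]. destruct (HP _ _ HPm0) as [_ [_ HevA]].
  assert (HA : (1 <= A)%nat).
  { destruct A; [|lia]. rewrite neumann_ev_0_0 in HevA. congruence. }
  assert (HB : (1 <= B)%nat).
  { destruct B; [|lia]. rewrite neumann_ev_0_0 in HevB. congruence. }
  exists (INR B), (INR A), A, B.
  assert (0 < INR A) by (apply lt_0_INR; lia). assert (0 < INR B) by (apply lt_0_INR; lia).
  repeat split; try lra; try lia.
  intros m n Hmn. destruct (HP m n Hmn) as [_ [_ Hev]].
  apply balanced_axis_quadrature; auto; congruence.
Qed.

Lemma sum_f_R0_single f N : (forall i, (0 < i <= N)%nat -> f i = 0) -> sum_f_R0 f N = f 0%nat.
Proof.
  induction N as [|N IH]; intros H; simpl; [reflexivity|].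
  rewrite IH, (H (S N)); [ring | lia | intros; apply H; lia].
Qed.

Lemma mode_comb_const c d N a x y :
  (forall m n, (m <= N)%nat -> (n <= N)%nat -> a m n <> 0 -> m = 0%nat /\ n = 0%nat) ->
  mode_comb c d N a x y = a 0%nat 0%nat.
Proof.
  intros Hsupp.
  assert (Hzero : forall m n, (m <= N)%nat -> (n <= N)%nat -> (0 < m \/ 0 < n)%nat -> a m n = 0).
  { intros m n Hm Hn Hmn. destruct (Req_dec (a m n) 0) as [E | E]; [exact E|].
    destruct (Hsupp m n Hm Hn E). lia. }
  unfold mode_comb. rewrite !sum_f_R0_single.
  - unfold neumann_mode. simpl INR. unfold Rdiv. rewrite !Rmult_0_l, cos_0. ring.
  - intros n Hn. rewrite Hzero by lia. ring.
  - intros m Hm. rewrite sum_f_R0_single; [rewrite Hzero by lia; ring|].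
    intros n Hn. rewrite Hzero by lia. ring.
Qed.

Theorem theorem1p1 (c d lam : R) (u : R -> R -> R) :
  0 < c -> 0 < d ->
  neumann_eigenfunction c d lam u ->
  (forall x y, on_boundary c d x y -> 0 < u x y) ->
  exists k : R, 0 < k /\ forall x y, in_closed_rect c d x y -> u x y = k.
Proof.
  intros Hc Hd [N [a [Hev [_ Hu]]]] Hpos.
  destruct (Req_dec lam 0) as [-> | Hlam].
  - assert (Hconst : forall x y, in_closed_rect c d x y -> u x y = a 0%nat 0%nat).
    { intros x y Hxy. rewrite (Hu x y Hxy). apply mode_comb_const.
      intros m n Hm Hn Ha. apply (neumann_ev_eq0 c d); auto. }
    exists (a 0%nat 0%nat). split; [|exact Hconst].
    assert (Horigin : in_closed_rect c d 0 0) by (split; lra).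
    rewrite <- (Hconst 0 0 Horigin). apply Hpos. split; auto.
  - destruct (annihilating_quadrature c d lam N
                (fun m n => (m <= N)%nat /\ (n <= N)%nat /\ a m n <> 0))
      as (al & be & A & B & Hal & Hbe & Hsum & HA & HB & Hann); auto.
    { intros m n (Hm & Hn & Ha). auto. }
    pose proof (boundary_quadrature_pos c d al be A B Hc Hd u Hal Hbe Hsum HA HB Hpos) as Hq.
    rewrite (boundary_quadrature_ext c d al be A B Hc Hd u (mode_comb c d N a) Hu),
      boundary_quadrature_mode_comb_eq0 in Hq; [lra|].
    intros m n Hm Hn Ha. apply Hann. auto.
Qed.
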